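(* Let $X$ be a topological space with $|X| \ge 3$. For each $i \in \{0,1,2,3,3\tfrac12,5,6\}$, $X$ is a $T_i$-space if and only if every card of $X$ is a $T_i$-space. Consequently, for these $i$, if $Z$ is a reconstruction of $X$ then $X$ is $T_i$ if and only if $Z$ is $T_i$. Moreover, if every card of $X$ is $T_3$ and at least one card of $X$ is $T_4$, then $X$ is $T_4$.
   Context: For a topological space $X$ and $x \in X$, the set $X\setminus\{x\}$ carries the subspace topology. A card of $X$ is a space homeomorphic to $X \setminus \{x\}$ for some $x \in X$. The deck of $X$ is $\mathcal{D}(X)=\{[X\setminus\{x\}]_\sim : x \in X\}$, where $[Y]_\sim$ denotes the homeomorphism class of $Y$. A space $Z$ is a reconstruction of $X$ if $\mathcal{D}(Z)=\mathcal{D}(X)$. Separation axioms include the lower ones: $T_3$ means regular and $T_1$; $T_{3\frac12}$ (Tychonoff) means completely regular and $T_1$; $T_4$ means normal and $T_1$; $T_5$ means every subspace is $T_4$; $T_6$ means $T_4$ and every closed set is a $G_\delta$-set. *)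

From Stdlib Require Import Reals.
Open Scope R_scope.

Record TopSpace := {
  carrier :> Type;
  is_open : (carrier -> Prop) -> Prop;
  open_full : is_open (fun _ => True);
  open_inter : forall U V, is_open U -> is_open V ->
                 is_open (fun x => U x /\ V x);
  open_union : forall F : (carrier -> Prop) -> Prop,
                 (forall U, F U -> is_open U) ->
                 is_open (fun x => exists U, F U /\ U x)
}.

Arguments is_open {t} _.

Definition is_closed {X : TopSpace} (A : X -> Prop) : Prop :=
  is_open (fun x => ~ A x).

Definition continuous {X Y : TopSpace} (f : X -> Y) : Prop :=
  forall V : Y -> Prop, is_open V -> is_open (fun x => V (f x)).

Definition homeomorphic (X Y : TopSpace) : Prop :=
  exists (f : X -> Y) (g : Y -> X),
    (forall x, g (f x) = x) /\ (forall y, f (g y) = y) /\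
    continuous f /\ continuous g.

Definition sub_open (X : TopSpace) (P : X -> Prop)
  (W : {x : X | P x} -> Prop) : Prop :=
  exists U : X -> Prop, is_open U /\ forall s, W s <-> U (proj1_sig s).

Lemma sub_open_full (X : TopSpace) (P : X -> Prop) : sub_open X P (fun _ => True).
Proof. exists (fun _ => True); split; [apply open_full | tauto]. Qed.

Lemma sub_open_inter (X : TopSpace) (P : X -> Prop) U V :
  sub_open X P U -> sub_open X P V -> sub_open X P (fun x => U x /\ V x).
Proof.
  intros [U' [HU HU']] [V' [HV HV']].
  exists (fun x => U' x /\ V' x); split; [apply open_inter; auto|].
  intro s; rewrite HU', HV'; tauto.
Qed.

Lemma sub_open_union (X : TopSpace) (P : X -> Prop) (F : ({x : X | P x} -> Prop) -> Prop) :
  (forall U, F U -> sub_open X P U) ->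
  sub_open X P (fun x => exists U, F U /\ U x).
Proof.
  intros H.
  exists (fun y => exists U', (exists U, F U /\ is_open U' /\
                     forall s, U s <-> U' (proj1_sig s)) /\ U' y).
  split.
  - apply (open_union X (fun U' => exists U, F U /\ is_open U' /\
                     forall s, U s <-> U' (proj1_sig s))).
    intros U' [U [_ [HO _]]]; exact HO.
  - intro s; split.
    + intros [U [HF HU]]. destruct (H U HF) as [U' [HO HE]].
      exists U'; split; [exists U; auto | apply HE; auto].
    + intros [U' [[U [HF [_ HE]]] HU']]. exists U; split; auto.
      apply HE; auto.
Qed.

Definition subspace (X : TopSpace) (P : X -> Prop) : TopSpace :=
  {| carrier := {x : X | P x};
     is_open := sub_open X P;
     open_full := sub_open_full X P;
     open_inter := sub_open_inter X P;
     open_union := sub_open_union X P |}.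

Definition remove_point (X : TopSpace) (x : X) : TopSpace :=
  subspace X (fun y => y <> x).

Definition is_card (Y X : TopSpace) : Prop :=
  exists x : X, homeomorphic Y (remove_point X x).

Definition reconstruction (Z X : TopSpace) : Prop :=
  forall Y : TopSpace, is_card Y Z <-> is_card Y X.

Definition T0 (X : TopSpace) : Prop :=
  forall x y : X, x <> y -> exists U, is_open U /\
    ((U x /\ ~ U y) \/ (U y /\ ~ U x)).

Definition T1 (X : TopSpace) : Prop :=
  forall x y : X, x <> y -> exists U, is_open U /\ U x /\ ~ U y.

Definition T2 (X : TopSpace) : Prop :=
  forall x y : X, x <> y -> exists U V, is_open U /\ is_open V /\
    U x /\ V y /\ (forall z, ~ (U z /\ V z)).

Definition regular (X : TopSpace) : Prop :=
  forall (A : X -> Prop) (x : X), is_closed A -> ~ A x ->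
    exists U V, is_open U /\ is_open V /\ (forall a, A a -> U a) /\ V x /\
      (forall z, ~ (U z /\ V z)).

Definition T3 (X : TopSpace) : Prop := regular X /\ T1 X.

Definition continuous_real {X : TopSpace} (f : X -> R) : Prop :=
  forall (y : X) (eps : R), 0 < eps ->
    exists U, is_open U /\ U y /\ forall z, U z -> Rabs (f z - f y) < eps.

Definition completely_regular (X : TopSpace) : Prop :=
  forall (A : X -> Prop) (x : X), is_closed A -> ~ A x ->
    exists f : X -> R, continuous_real f /\
      (forall z, 0 <= f z <= 1) /\ f x = 0 /\ (forall a, A a -> f a = 1).

Definition T3half (X : TopSpace) : Prop := completely_regular X /\ T1 X.

Definition normal (X : TopSpace) : Prop :=
  forall A B : X -> Prop, is_closed A -> is_closed B ->
    (forall z, ~ (A z /\ B z)) ->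
    exists U V, is_open U /\ is_open V /\ (forall a, A a -> U a) /\
      (forall b, B b -> V b) /\ (forall z, ~ (U z /\ V z)).

Definition T4 (X : TopSpace) : Prop := normal X /\ T1 X.

Definition T5 (X : TopSpace) : Prop :=
  forall P : X -> Prop, T4 (subspace X P).

Definition G_delta {X : TopSpace} (A : X -> Prop) : Prop :=
  exists U : nat -> X -> Prop, (forall n, is_open (U n)) /\
    forall x, A x <-> forall n, U n x.

Definition T6 (X : TopSpace) : Prop :=
  T4 X /\ forall A : X -> Prop, is_closed A -> G_delta A.

(** Indices i in {0,1,2,3,3 1/2,5,6} (4 is treated separately). *)
Inductive sep_index := i0 | i1 | i2 | i3 | i3half | i5 | i6.

Definition T_ (i : sep_index) (X : TopSpace) : Prop :=
  match i with
  | i0 => T0 X | i1 => T1 X | i2 => T2 X | i3 => T3 X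
  | i3half => T3half X | i5 => T5 X | i6 => T6 X
  end.

Definition at_least_three (X : TopSpace) : Prop :=
  exists a b c : X, a <> b /\ a <> c /\ b <> c.

From Stdlib Require Import Reals Lra Lia Classical ClassicalEpsilon
  FunctionalExtensionality PropExtensionality ProofIrrelevance.

(** Each T_i is invariant under
     homeomorphism, and passes to the subspace X \ {x}: for i <> 6 because
     it is hereditary along embeddings, for i = 6 because closed sets of
     X \ {x} meeting only at the G_delta point x can be separated off x
     (normal_separate_off_G_delta).
   - Every card is T_i  =>  X is T_i.  Two points of X always lie in a common
     card, which gives T0 and T1.  A T1 space has open cards, so disjoint
     open sets of a card are disjoint open sets of X; the remaining axioms
     are proved by separating inside a card X \ {z} with z chosen away from
     the sets involved, the degenerate case (no such z) being trivial.
   - The reconstruction statement follows since a reconstruction Z of X has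
     the same cards and again at least three points.
   - A T3 space X with one normal card X \ {x} is normal: regularity handles
     the point x, normality of X \ {x} handles the rest. *)

Lemma open_ext {X : TopSpace} (U V : X -> Prop) :
  is_open U -> (forall x, U x <-> V x) -> is_open V.
Proof.
  intros HU HUV.
  replace V with U; [exact HU|].
  apply functional_extensionality; intro x; apply propositional_extensionality; auto.
Qed.

Lemma open_union2 {X : TopSpace} (U V : X -> Prop) :
  is_open U -> is_open V -> is_open (fun x => U x \/ V x).
Proof.
  intros HU HV.
  apply (open_ext _ _ (open_union X (fun W => W = U \/ W = V)
    (fun W HW => ltac:(destruct HW; subst; auto)))).
  intro x; split.
  - intros [W [[-> | ->] Hx]]; auto.
  - intros [Hx | Hx]; [exists U | exists V]; auto.
Qed.

Lemma open_countable_union {X : TopSpace} (U : nat -> X -> Prop) :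
  (forall n, is_open (U n)) -> is_open (fun x => exists n, U n x).
Proof.
  intros HU.
  apply (open_ext _ _ (open_union X (fun W => exists n, W = U n)
    (fun W HW => ltac:(destruct HW as [n ->]; auto)))).
  intro x; split.
  - intros [W [[n ->] Hx]]; eauto.
  - intros [n Hx]; exists (U n); eauto.
Qed.

Lemma open_initial_inter {X : TopSpace} (U : nat -> X -> Prop) (n : nat) :
  (forall k, is_open (U k)) -> is_open (fun x => forall k, (k <= n)%nat -> U k x).
Proof.
  intros HU; induction n as [|n IH].
  - apply (open_ext _ _ (HU 0%nat)); intro x; split.
    + intros Hx k Hk; replace k with 0%nat by lia; exact Hx.
    + intros Hx; apply Hx; lia.
  - apply (open_ext _ _ (open_inter _ _ _ IH (HU (S n)))); intro x; split.
    + intros [Hle HS] k Hk.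
      destruct (Nat.eq_dec k (S n)) as [-> | Hne]; [exact HS | apply Hle; lia].
    + intros Hx; split; [intros k Hk|]; apply Hx; lia.
Qed.

Lemma closed_compl {X : TopSpace} (U : X -> Prop) :
  is_open U -> is_closed (fun x => ~ U x).
Proof.
  intros HU; apply (open_ext _ _ HU); intro x; split; [tauto | apply NNPP].
Qed.

Lemma closed_union {X : TopSpace} (A B : X -> Prop) :
  is_closed A -> is_closed B -> is_closed (fun x => A x \/ B x).
Proof.
  intros HA HB; apply (open_ext _ _ (open_inter _ _ _ HA HB)); intro x; tauto.
Qed.

Lemma closed_diff_open {X : TopSpace} (A W : X -> Prop) :
  is_closed A -> is_open W -> is_closed (fun x => A x /\ ~ W x).
Proof.
  intros HA HW; apply (open_ext _ _ (open_union2 _ _ HA HW)); intro x; split.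
  - tauto.
  - intros H; destruct (classic (A x)); [right; apply NNPP|left]; tauto.
Qed.

Lemma T1_open_point_compl {X : TopSpace} (z : X) :
  T1 X -> is_open (fun t => t <> z).
Proof.
  intros H1.
  apply (open_ext _ _ (open_union X (fun U => is_open U /\ ~ U z)
                         (fun U HU => proj1 HU))).
  intro t; split.
  - intros [U [[_ Hz] Ht]] ->; auto.
  - intros Ht; destruct (H1 t z Ht) as [U [HU [Hin Hout]]]; exists U; auto.
Qed.

Lemma T1_point_closed {X : TopSpace} (z : X) : T1 X -> is_closed (fun t => t = z).
Proof. intros H1; apply (open_ext _ _ (T1_open_point_compl z H1)); tauto. Qed.

Definition embedding {S T : TopSpace} (e : S -> T) : Prop :=
  (forall a b, e a = e b -> a = b) /\
  (forall U, is_open U -> is_open (fun s => U (e s))) /\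
  (forall W, is_open W -> exists U, is_open U /\ forall s, W s <-> U (e s)).

Definition surjective {A B : Type} (f : A -> B) : Prop :=
  forall b, exists a, f a = b.

Lemma embedding_id (Y : TopSpace) : embedding (fun y : Y => y).
Proof. split; [|split]; auto. intros W HW; exists W; split; auto; tauto. Qed.

Lemma embedding_comp {S T U : TopSpace} (e1 : S -> T) (e2 : T -> U) :
  embedding e1 -> embedding e2 -> embedding (fun s => e2 (e1 s)).
Proof.
  intros [inj1 [cont1 open1]] [inj2 [cont2 open2]]; split; [|split].
  - auto.
  - intros V HV; exact (cont1 _ (cont2 _ HV)).
  - intros W HW.
    destruct (open1 W HW) as [V [HV EV]]; destruct (open2 V HV) as [V' [HV' EV']].
    exists V'; split; auto; intro s; rewrite EV; auto.
Qed.

Lemma subspace_embedding (X : TopSpace) (P : X -> Prop) :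
  @embedding (subspace X P) X (@proj1_sig _ _).
Proof.
  split; [|split].
  - intros [a ha] [b hb]; simpl; intros ->; f_equal; apply proof_irrelevance.
  - intros U HU; exists U; split; auto; tauto.
  - intros W [U [HU E]]; exists U; auto.
Qed.

Lemma embedding_corestrict {S T : TopSpace} (e : S -> T) (Q : T -> Prop)
  (hQ : forall s, Q (e s)) :
  embedding e -> @embedding S (subspace T Q) (fun s => exist Q (e s) (hQ s)).
Proof.
  intros [inj [cont open]]; split; [|split].
  - intros a b E; apply inj; exact (f_equal (@proj1_sig _ _) E).
  - intros U [U' [HU' E]]; apply (open_ext _ _ (cont U' HU')); intro s.
    rewrite (E (exist Q (e s) (hQ s))); simpl; tauto.
  - intros W HW; destruct (open W HW) as [U [HU E]].
    exists (fun q : subspace T Q => U (proj1_sig q)); split; auto.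
    exists U; split; auto; tauto.
Qed.

Lemma homeomorphic_embedding (Y Z : TopSpace) : homeomorphic Y Z ->
  exists f : Y -> Z, embedding f /\ surjective f.
Proof.
  intros [f [g [gf [fg [cf cg]]]]]; exists f; split; [split; [|split]|].
  - intros a b E; rewrite <- (gf a), <- (gf b), E; auto.
  - exact cf.
  - intros W HW; exists (fun z => W (g z)); split; [apply cg; auto|].
    intro s; rewrite gf; tauto.
  - intro z; exists (g z); auto.
Qed.

Lemma homeomorphic_sym (Y Z : TopSpace) : homeomorphic Y Z -> homeomorphic Z Y.
Proof. intros [f [g [gf [fg [cf cg]]]]]; exists g, f; auto. Qed.

Lemma remove_point_is_card (X : TopSpace) (z : X) : is_card (remove_point X z) X.
Proof.
  exists z, (fun y => y), (fun y => y); repeat split; intros V HV; exact HV.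
Qed.

Section EmbeddingClosedSets.
Variables (S T : TopSpace) (e : S -> T).
Hypothesis He : embedding e.

Lemma embedding_closed_trace (A : S -> Prop) :
  is_closed A -> exists A', is_closed A' /\ forall s, A s <-> A' (e s).
Proof.
  intros HA; destruct He as [_ [_ open]]; destruct (open _ HA) as [U [HU E]].
  exists (fun t => ~ U t); split; [apply closed_compl; auto|].
  intro s; rewrite <- E; split; [tauto | apply NNPP].
Qed.

Lemma embedding_closed_preimage (A : T -> Prop) :
  is_closed A -> is_closed (fun s => A (e s)).
Proof. intros HA; destruct He as [_ [cont _]]; exact (cont _ HA). Qed.
End EmbeddingClosedSets.

Arguments embedding_closed_trace {S T} e _ A _.
Arguments embedding_closed_preimage {S T} e _ A _.

Lemma closed_restrict (X : TopSpace) (P : X -> Prop) (A : X -> Prop) :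
  is_closed A -> @is_closed (subspace X P) (fun s => A (proj1_sig s)).
Proof. exact (embedding_closed_preimage _ (subspace_embedding X P) A). Qed.

(** * Properties inherited along embeddings *)

Section Hereditary.
Variables (S T : TopSpace) (e : S -> T).
Hypothesis He : embedding e.

Lemma T0_embedding : T0 T -> T0 S.
Proof.
  destruct He as [inj [cont _]]; intros H x y Hxy.
  destruct (H (e x) (e y) (fun E => Hxy (inj _ _ E))) as [U [HU Hsep]].
  exists (fun s => U (e s)); auto.
Qed.

Lemma T1_embedding : T1 T -> T1 S.
Proof.
  destruct He as [inj [cont _]]; intros H x y Hxy.
  destruct (H (e x) (e y) (fun E => Hxy (inj _ _ E))) as [U [HU Hsep]].
  exists (fun s => U (e s)); auto.
Qed.

Lemma T2_embedding : T2 T -> T2 S.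
Proof.
  destruct He as [inj [cont _]]; intros H x y Hxy.
  destruct (H (e x) (e y) (fun E => Hxy (inj _ _ E)))
    as [U [V [HU [HV [Ux [Vy disj]]]]]].
  exists (fun s => U (e s)), (fun s => V (e s)); repeat split; auto.
Qed.

Lemma regular_embedding : regular T -> regular S.
Proof.
  intros H A x HA Hx; destruct (embedding_closed_trace e He A HA) as [A' [HA' E]].
  destruct He as [_ [cont _]].
  destruct (H A' (e x) HA' (fun h => Hx (proj2 (E x) h)))
    as [U [V [HU [HV [AU [Vx disj]]]]]].
  exists (fun s => U (e s)), (fun s => V (e s)); repeat split; auto.
  - intros a Ha; apply AU, E, Ha.
Qed.

Lemma completely_regular_embedding : completely_regular T -> completely_regular S.
Proof.
  intros H A x HA Hx; destruct (embedding_closed_trace e He A HA) as [A' [HA' E]].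
  destruct He as [_ [cont _]].
  destruct (H A' (e x) HA' (fun h => Hx (proj2 (E x) h))) as [f [cf [f01 [fx fA]]]].
  exists (fun s => f (e s)); split; [|split; [|split]]; auto.
  - intros y eps Heps; destruct (cf (e y) eps Heps) as [U [HU [Uy Hclose]]].
    exists (fun s => U (e s)); auto.
  - intros a Ha; apply fA, E, Ha.
Qed.

Lemma closed_G_delta_embedding :
  (forall A : T -> Prop, is_closed A -> G_delta A) ->
  forall A : S -> Prop, is_closed A -> G_delta A.
Proof.
  intros H A HA; destruct (embedding_closed_trace e He A HA) as [A' [HA' E]].
  destruct He as [_ [cont _]]; destruct (H A' HA') as [U [HU EU]].
  exists (fun n s => U n (e s)); split; [intro n; apply cont, HU|].
  intro x; rewrite E; apply EU.
Qed.

(* Normality is not hereditary, but it is invariant under homeomorphism. *)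
Lemma normal_surjective_embedding : surjective e -> normal T -> normal S.
Proof.
  intros Hs H A B HA HB disjAB.
  destruct (embedding_closed_trace e He A HA) as [A' [HA' EA]].
  destruct (embedding_closed_trace e He B HB) as [B' [HB' EB]].
  destruct He as [_ [cont _]].
  assert (disjAB' : forall t, ~ (A' t /\ B' t)).
  { intros t [Ha Hb]; destruct (Hs t) as [s <-].
    apply (disjAB s); split; [apply EA | apply EB]; auto. }
  destruct (H A' B' HA' HB' disjAB') as [U [V [HU [HV [AU [BV disj]]]]]].
  exists (fun s => U (e s)), (fun s => V (e s)); repeat split; auto.
  - intros a Ha; apply AU, EA, Ha.
  - intros b Hb; apply BV, EB, Hb.
Qed.

Lemma T4_surjective_embedding : surjective e -> T4 T -> T4 S.
Proof.
  intros Hs [Hn H1]; split; [apply normal_surjective_embedding | apply T1_embedding]; auto.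
Qed.

End Hereditary.

(* A space embedded in a T5 space is T4, being homeomorphic to its image. *)
Lemma T4_of_embedding_into_T5 {S T : TopSpace} (e : S -> T) :
  embedding e -> T5 T -> T4 S.
Proof.
  intros He H5.
  set (Q := fun t => exists s, e s = t).
  assert (hQ : forall s, Q (e s)) by (intro s; exists s; auto).
  apply (T4_surjective_embedding _ _ _ (embedding_corestrict e Q hQ He)); [|apply H5].
  intros [t [s Hs]]; exists s; subst; f_equal; apply proof_irrelevance.
Qed.

Lemma T5_T4 (Y : TopSpace) : T5 Y -> T4 Y.
Proof. exact (T4_of_embedding_into_T5 _ (embedding_id Y)). Qed.

Lemma T5_embedding {S T : TopSpace} (e : S -> T) : embedding e -> T5 T -> T5 S.
Proof.
  intros He H5 P; apply (T4_of_embedding_into_T5 (fun s : subspace S P => e (proj1_sig s))); auto.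
  exact (embedding_comp _ e (subspace_embedding S P) He).
Qed.

(** * Perfectly normal spaces: the complement of a point is normal *)

Lemma normal_separate_sequence (X : TopSpace) (A B : nat -> X -> Prop) :
  normal X -> (forall n, is_closed (A n)) -> (forall n, is_closed (B n)) ->
  (forall n t, ~ (A n t /\ B n t)) ->
  exists G H : nat -> X -> Prop, forall n,
    is_open (G n) /\ is_open (H n) /\ (forall t, A n t -> G n t) /\
    (forall t, B n t -> H n t) /\ (forall t, ~ (G n t /\ H n t)).
Proof.
  intros Hn HA HB disj.
  destruct (choice (fun n (GH : (X -> Prop) * (X -> Prop)) =>
    is_open (fst GH) /\ is_open (snd GH) /\ (forall t, A n t -> fst GH t) /\
    (forall t, B n t -> snd GH t) /\ (forall t, ~ (fst GH t /\ snd GH t))))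
    as [GH HGH].
  { intro n; destruct (Hn _ _ (HA n) (HB n) (disj n)) as [G [H HGH]]; exists (G, H); exact HGH. }
  exists (fun n => fst (GH n)), (fun n => snd (GH n)); exact HGH.
Qed.

Lemma normal_separate_off_G_delta (X : TopSpace) (A B : X -> Prop) (W : nat -> X -> Prop) :
  normal X -> is_closed A -> is_closed B -> (forall n, is_open (W n)) ->
  (forall n t, A t -> B t -> W n t) ->
  exists U V, is_open U /\ is_open V /\
    (forall a n, A a -> ~ W n a -> U a) /\ (forall b n, B b -> ~ W n b -> V b) /\
    (forall t, ~ (U t /\ V t)).
Proof.
  intros Hn HA HB HW AB_W.
  (* G n separates A \ W n from B, and K n separates B \ W n from A. *)
  destruct (normal_separate_sequence X (fun n t => A t /\ ~ W n t) (fun _ => B) Hn)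
    as [G [HB' sepA]].
  { intro n; apply closed_diff_open; auto. }
  { intro n; exact HB. }
  { intros n t [[Ha HnW] Hb]; exact (HnW (AB_W n t Ha Hb)). }
  destruct (normal_separate_sequence X (fun n t => B t /\ ~ W n t) (fun _ => A) Hn)
    as [K [HA' sepB]].
  { intro n; apply closed_diff_open; auto. }
  { intro n; exact HA. }
  { intros n t [[Hb HnW] Ha]; exact (HnW (AB_W n t Ha Hb)). }
  exists (fun t => exists n, G n t /\ forall k, (k <= n)%nat -> HA' k t),
         (fun t => exists m, K m t /\ forall k, (k <= m)%nat -> HB' k t).
  split; [|split; [|split; [|split]]].
  - apply open_countable_union; intro n.
    apply open_inter; [apply sepA | apply open_initial_inter; intro k; apply sepB].
  - apply open_countable_union; intro m.
    apply open_inter; [apply sepB | apply open_initial_inter; intro k; apply sepA].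
  - intros a n Ha HnW; exists n; split; [apply sepA; auto|].
    intros k _; apply sepB; auto.
  - intros b m Hb HmW; exists m; split; [apply sepB; auto|].
    intros k _; apply sepA; auto.
  - (* With n <= m the point would lie in G n and HB' n; otherwise in K m and HA' m. *)
    intros t [[n [Gt HA't]] [m [Kt HB't]]].
    destruct (Compare_dec.le_lt_dec n m) as [Hnm | Hmn].
    + apply (proj2 (proj2 (proj2 (proj2 (sepA n)))) t); auto.
    + apply (proj2 (proj2 (proj2 (proj2 (sepB m)))) t); split; auto.
      apply HA't; lia.
Qed.

(* If X is T6 (so {x} is a G_delta), then X \ {x} is normal: closed sets of
   X \ {x} extend to closed sets of X meeting at most in x. *)
Lemma normal_remove_point_T6 (X : TopSpace) (x : X) : T6 X -> normal (remove_point X x).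
Proof.
  intros [[Hn H1] HG] A B HA HB disjAB.
  destruct (embedding_closed_trace _ (subspace_embedding X _) A HA) as [A' [HA' EA]].
  destruct (embedding_closed_trace _ (subspace_embedding X _) B HB) as [B' [HB' EB]].
  destruct (HG _ (T1_point_closed x H1)) as [W [HW EW]].
  assert (A'B'_x : forall n t, A' t -> B' t -> W n t).
  { intros n t Ha Hb; apply (proj1 (EW t)).
    apply NNPP; intro Htx.
    apply (disjAB (exist _ t Htx)); split; [apply EA | apply EB]; auto. }
  assert (off_x : forall s : remove_point X x, exists n, ~ W n (proj1_sig s)).
  { intros [t Ht]; apply NNPP; intro Hall; apply Ht, EW.
    intro n; apply NNPP; intro HnW; apply Hall; eauto. }
  destruct (normal_separate_off_G_delta X A' B' W Hn HA' HB' HW A'B'_x)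
    as [U [V [HU [HV [AU [BV disj]]]]]].
  destruct (subspace_embedding X (fun y => y <> x)) as [_ [cont _]].
  exists (fun s : remove_point X x => U (proj1_sig s)),
         (fun s : remove_point X x => V (proj1_sig s)).
  split; [|split; [|split; [|split]]]; auto.
  - intros a Ha; destruct (off_x a) as [n Hn']; apply (AU _ n); auto; apply EA, Ha.
  - intros b Hb; destruct (off_x b) as [n Hn']; apply (BV _ n); auto; apply EB, Hb.
Qed.

(** * Every card of a T_i space is T_i *)

Lemma T_surjective_embedding (i : sep_index) {S T : TopSpace} (e : S -> T) :
  embedding e -> surjective e -> T_ i T -> T_ i S.
Proof.
  intros He Hs; destruct i; simpl.
  - apply (T0_embedding _ _ e He).
  - apply (T1_embedding _ _ e He).
  - apply (T2_embedding _ _ e He).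
  - intros [Hr H1]; split;
      [apply (regular_embedding _ _ e He) | apply (T1_embedding _ _ e He)]; auto.
  - intros [Hc H1]; split;
      [apply (completely_regular_embedding _ _ e He) | apply (T1_embedding _ _ e He)]; auto.
  - apply (T5_embedding e He).
  - intros [H4 HG]; split;
      [apply (T4_surjective_embedding _ _ e He Hs)
      | apply (closed_G_delta_embedding _ _ e He)]; auto.
Qed.

(* All the T_i pass to X \ {x}: for i <> 6 they are hereditary. *)
Lemma T_remove_point (i : sep_index) (X : TopSpace) (x : X) :
  T_ i X -> T_ i (remove_point X x).
Proof.
  pose proof (subspace_embedding X (fun y => y <> x)) as He.
  destruct i; simpl.
  - apply (T0_embedding _ _ _ He).
  - apply (T1_embedding _ _ _ He).
  - apply (T2_embedding _ _ _ He).
  - intros [Hr H1]; split;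
      [apply (regular_embedding _ _ _ He) | apply (T1_embedding _ _ _ He)]; auto.
  - intros [Hc H1]; split;
      [apply (completely_regular_embedding _ _ _ He) | apply (T1_embedding _ _ _ He)]; auto.
  - apply (T5_embedding _ He).
  - intros H6; split; [split|].
    + apply normal_remove_point_T6, H6.
    + apply (T1_embedding _ _ _ He), H6.
    + apply (closed_G_delta_embedding _ _ _ He), H6.
Qed.

Lemma T_card (i : sep_index) (X Y : TopSpace) : T_ i X -> is_card Y X -> T_ i Y.
Proof.
  intros HX [x Hhom]; destruct (homeomorphic_embedding _ _ Hhom) as [f [Hf Hs]].
  exact (T_surjective_embedding i f Hf Hs (T_remove_point i X x HX)).
Qed.

Lemma open_subspace_lift (X : TopSpace) (P : X -> Prop) (W : subspace X P -> Prop) :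
  is_open P -> is_open W ->
  exists U, is_open U /\ (forall t, U t -> P t) /\ forall s, W s <-> U (proj1_sig s).
Proof.
  intros HP [U [HU E]]; exists (fun t => U t /\ P t); split; [|split].
  - apply open_inter; auto.
  - tauto.
  - intros [s hs]; simpl; rewrite (E (exist _ s hs)); simpl; tauto.
Qed.

Lemma open_subspace_lift_disjoint (X : TopSpace) (P : X -> Prop) (U V : subspace X P -> Prop) :
  is_open P -> is_open U -> is_open V -> (forall s, ~ (U s /\ V s)) ->
  exists U' V', is_open U' /\ is_open V' /\
    (forall s, U s -> U' (proj1_sig s)) /\ (forall s, V s -> V' (proj1_sig s)) /\
    (forall t, ~ (U' t /\ V' t)).
Proof.
  intros HP HU HV disj.
  destruct (open_subspace_lift X P U HP HU) as [U' [HU' [PU EU]]].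
  destruct (open_subspace_lift X P V HP HV) as [V' [HV' [PV EV]]].
  exists U', V'; split; [|split; [|split; [|split]]]; auto.
  - intros s Hs; apply EU, Hs.
  - intros s Hs; apply EV, Hs.
  - intros t [Ut Vt]; apply (disj (exist _ t (PU t Ut))); split; [apply EU | apply EV]; auto.
Qed.

Lemma two_points_in_card (X : TopSpace) (x y : X) : at_least_three X ->
  exists (z : X) (sx sy : remove_point X z), proj1_sig sx = x /\ proj1_sig sy = y.
Proof.
  intros [a [b [c [hab [hac hbc]]]]].
  assert (Hz : exists z, x <> z /\ y <> z).
  { apply NNPP; intro Hno.
    assert (Hxy : forall z, z = x \/ z = y)
      by (intro z; apply NNPP; intro Hz; apply Hno; exists z; split; intro; subst; tauto).
    destruct (Hxy a), (Hxy b), (Hxy c); subst; congruence. }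
  destruct Hz as [z [hx hy]]; exists z, (exist _ x hx), (exist _ y hy); auto.
Qed.

(** * Recovering X from its cards: the separation axioms *)

Section FromCards.
Variable X : TopSpace.

Lemma T0_from_cards : at_least_three X -> (forall z : X, T0 (remove_point X z)) -> T0 X.
Proof.
  intros H3 H x y Hxy.
  destruct (two_points_in_card X x y H3) as [z [sx [sy [<- <-]]]].
  destruct (H z sx sy (fun E => Hxy (f_equal (@proj1_sig _ _) E))) as [W [[U [HU EU]] Hsep]].
  exists U; rewrite !EU in Hsep; auto.
Qed.

Lemma T1_from_cards : at_least_three X -> (forall z : X, T1 (remove_point X z)) -> T1 X.
Proof.
  intros H3 H x y Hxy.
  destruct (two_points_in_card X x y H3) as [z [sx [sy [<- <-]]]].
  destruct (H z sx sy (fun E => Hxy (f_equal (@proj1_sig _ _) E))) as [W [[U [HU EU]] Hsep]].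
  exists U; rewrite !EU in Hsep; auto.
Qed.

(* From here on X is T1, so every card is an open subspace of X. *)
Hypothesis H1 : T1 X.

Lemma T2_from_cards : at_least_three X -> (forall z : X, T2 (remove_point X z)) -> T2 X.
Proof.
  intros H3 H x y Hxy.
  destruct (two_points_in_card X x y H3) as [z [sx [sy [<- <-]]]].
  destruct (H z sx sy (fun E => Hxy (f_equal (@proj1_sig _ _) E)))
    as [U [V [HU [HV [Ux [Vy disj]]]]]].
  destruct (open_subspace_lift_disjoint X _ U V (T1_open_point_compl z H1) HU HV disj)
    as [U' [V' [HU' [HV' [UU' [VV' disj']]]]]].
  exists U', V'; repeat split; auto.
Qed.

(* To separate x from A use a card X \ {z} with z outside A and z <> x; if
   there is no such z, then A = X \ {x} is open and {x} is open. *)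
Lemma regular_from_cards : (forall z : X, regular (remove_point X z)) -> regular X.
Proof.
  intros H A x HA Hx.
  destruct (classic (exists z, z <> x /\ ~ A z)) as [[z [hzx hz]] | Hno].
  - assert (hx : x <> z) by auto.
    destruct (H z _ (exist _ x hx) (closed_restrict X _ A HA) Hx)
      as [U [V [HU [HV [AU [Vx disj]]]]]].
    destruct (open_subspace_lift_disjoint X _ U V (T1_open_point_compl z H1) HU HV disj)
      as [U' [V' [HU' [HV' [UU' [VV' disj']]]]]].
    exists U', V'; repeat split; auto.
    + intros a Ha; assert (ha : a <> z) by (intro; subst; auto).
      exact (UU' (exist _ a ha) (AU (exist _ a ha) Ha)).
    + exact (VV' _ Vx).
  - exists (fun t => t <> x), (fun t => ~ A t); repeat split; auto.
    + apply T1_open_point_compl; auto.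
    + intros a Ha ->; auto.
    + intros t [Htx HtA]; apply Hno; eauto.
Qed.

(* Two disjoint closed sets are separated in a card X \ {z} with z outside
   both; if there is no such z, they are complementary and hence open. *)
Lemma normal_from_cards : (forall z : X, normal (remove_point X z)) -> normal X.
Proof.
  intros H A B HA HB disjAB.
  destruct (classic (exists z, ~ A z /\ ~ B z)) as [[z [hA hB]] | Hno].
  - destruct (H z _ _ (closed_restrict X _ A HA) (closed_restrict X _ B HB)
                 (fun s => disjAB (proj1_sig s))) as [U [V [HU [HV [AU [BV disj]]]]]].
    destruct (open_subspace_lift_disjoint X _ U V (T1_open_point_compl z H1) HU HV disj)
      as [U' [V' [HU' [HV' [UU' [VV' disj']]]]]].
    exists U', V'; repeat split; auto.
    + intros a Ha; assert (ha : a <> z) by (intro; subst; auto).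
      exact (UU' (exist _ a ha) (AU (exist _ a ha) Ha)).
    + intros b Hb; assert (hb : b <> z) by (intro; subst; auto).
      exact (VV' (exist _ b hb) (BV (exist _ b hb) Hb)).
  - exists (fun t => ~ B t), (fun t => ~ A t); repeat split; auto.
    + intros a Ha Hb; apply (disjAB a); auto.
    + intros b Hb Ha; apply (disjAB b); auto.
    + intros t [HnB HnA]; apply Hno; eauto.
Qed.

Lemma closed_G_delta_from_cards :
  (forall (z : X) (A : remove_point X z -> Prop), is_closed A -> G_delta A) ->
  forall A : X -> Prop, is_closed A -> G_delta A.
Proof.
  intros H A HA.
  destruct (classic (exists z, ~ A z)) as [[z hz] | Hno].
  - destruct (H z _ (closed_restrict X _ A HA)) as [U [HU EU]].
    destruct (choice (fun n V => is_open V /\ (forall t, V t -> t <> z) /\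
                         forall s, U n s <-> V (proj1_sig s)))
      as [V HV].
    { intro n; apply open_subspace_lift; auto; apply T1_open_point_compl; auto. }
    exists V; split; [intro n; apply HV|].
    intro t; destruct (classic (t = z)) as [-> | ht].
    + split; [tauto|]; intro Hall; destruct (proj1 (proj2 (HV 0%nat)) z (Hall 0%nat) eq_refl).
    + rewrite (EU (exist _ t ht)); split; intros Hall n.
      * exact (proj1 (proj2 (proj2 (HV n)) (exist _ t ht)) (Hall n)).
      * exact (proj2 (proj2 (proj2 (HV n)) (exist _ t ht)) (Hall n)).
  - exists (fun _ _ => True); split; [intro; apply open_full|].
    intro t; split; auto; intros _; apply NNPP; intro Ht; apply Hno; eauto.
Qed.

(* Every subspace avoiding some point z embeds in the T5 card X \ {z}; the
   remaining subspace is X itself, normal by normal_from_cards. *)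
Lemma T5_from_cards : (forall z : X, T5 (remove_point X z)) -> T5 X.
Proof.
  intros H P.
  destruct (classic (exists z, ~ P z)) as [[z hz] | Hno].
  - assert (hP : forall s : subspace X P, proj1_sig s <> z)
      by (intros [s hs] E; simpl in E; subst; auto).
    apply (T4_of_embedding_into_T5 (T := remove_point X z)
             (fun s : subspace X P => exist _ (proj1_sig s) (hP s))); [|apply H].
    exact (embedding_corestrict _ _ hP (subspace_embedding X P)).
  - apply (T4_surjective_embedding _ _ _ (subspace_embedding X P)).
    + intro t; assert (pt : P t) by (apply NNPP; intro; apply Hno; eauto).
      exists (exist _ t pt); auto.
    + split; auto; apply normal_from_cards; intro z; apply T5_T4, H.
Qed.
End FromCards.

(** * Recovering complete regularity from the cards *)

Definition continuous_real_at {X : TopSpace} (f : X -> R) (y : X) : Prop :=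
  forall eps, 0 < eps ->
    exists U, is_open U /\ U y /\ forall z, U z -> Rabs (f z - f y) < eps.

Lemma continuous_at_locally_constant {X : TopSpace} (f : X -> R) (y : X) (O : X -> Prop) :
  is_open O -> O y -> (forall t, O t -> f t = f y) -> continuous_real_at f y.
Proof.
  intros HO Oy Hconst eps Heps; exists O; repeat split; auto.
  intros t Ot; rewrite (Hconst t Ot), Rminus_diag, Rabs_R0; exact Heps.
Qed.

Lemma clopen_indicator (X : TopSpace) (U : X -> Prop) :
  is_open U -> is_open (fun t => ~ U t) ->
  exists f : X -> R, continuous_real f /\
    (forall t, U t -> f t = 0) /\ (forall t, ~ U t -> f t = 1).
Proof.
  intros HU HnU.
  set (f := fun t => if excluded_middle_informative (U t) then 0 else 1).
  assert (f0 : forall t, U t -> f t = 0)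
    by (intros t Ut; unfold f; destruct excluded_middle_informative; tauto).
  assert (f1 : forall t, ~ U t -> f t = 1)
    by (intros t Ut; unfold f; destruct excluded_middle_informative; tauto).
  exists f; split; [|split]; auto.
  intro y; destruct (classic (U y)) as [Uy | nUy].
  - apply (continuous_at_locally_constant f y U); auto.
    intros t Ut; rewrite f0, f0; auto.
  - apply (continuous_at_locally_constant f y (fun t => ~ U t)); auto.
    intros t Ut; rewrite f1, f1; auto.
Qed.

Lemma extend_card_function (X : TopSpace) (z : X) (N : X -> Prop)
  (g : remove_point X z -> R) :
  T1 X -> is_open N -> N z -> continuous_real g ->
  (forall t (ht : t <> z), N t -> g (exist _ t ht) = 1) ->
  exists f : X -> R, continuous_real f /\ f z = 1 /\
    forall t (ht : t <> z), f t = g (exist _ t ht).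
Proof.
  intros H1 HN Nz cg gN.
  set (f := fun t => match excluded_middle_informative (t = z) with
                     | left _ => 1 | right ht => g (exist _ t ht) end).
  assert (fz : f z = 1) by (unfold f; destruct excluded_middle_informative; congruence).
  assert (fg : forall t (ht : t <> z), f t = g (exist _ t ht)).
  { intros t ht; unfold f; destruct excluded_middle_informative as [E | ht']; [congruence|].
    do 2 f_equal; apply proof_irrelevance. }
  exists f; split; [|split]; auto.
  intros y; destruct (classic (y = z)) as [-> | hy].
  - (* f is identically 1 on N *)
    apply (continuous_at_locally_constant f z N); auto.
    intros t Nt; rewrite fz; destruct (classic (t = z)) as [-> | ht]; auto.
    rewrite (fg t ht); auto.
  - intros eps Heps; destruct (cg (exist _ y hy) eps Heps) as [U [HU [Uy Hclose]]].
    destruct (open_subspace_lift X _ U (T1_open_point_compl z H1) HU) as [U' [HU' [U'z EU]]].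
    exists U'; split; [|split]; auto.
    + exact (proj1 (EU _) Uy).
    + intros t Ut; rewrite (fg t (U'z t Ut)), (fg y hy).
      apply Hclose, EU; exact Ut.
Qed.

(* To separate x from A, pick z <> x outside A, use regularity to find an
   open N around z missing a neighbourhood M of A and x, separate x from
   A \/ ~ M in the card X \ {z}, and extend by 1 at z. *)
Lemma completely_regular_from_cards (X : TopSpace) : T1 X -> regular X ->
  (forall z : X, completely_regular (remove_point X z)) -> completely_regular X.
Proof.
  intros H1 Hreg H A x HA Hx.
  destruct (classic (exists z, z <> x /\ ~ A z)) as [[z [hzx hz]] | Hno].
  - assert (hx : x <> z) by auto.
    destruct (Hreg _ z (closed_union _ _ HA (T1_point_closed x H1)) ltac:(tauto))
      as [M [N [HM [HN [AM [Nz disjMN]]]]]].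
    assert (HB : is_closed (fun t => A t \/ ~ M t))
      by (apply closed_union, closed_compl; auto).
    destruct (H z _ (exist _ x hx) (closed_restrict X _ _ HB)
                ltac:(simpl; intros [Ax | nMx]; auto))
      as [g [cg [g01 [gx gB]]]].
    destruct (extend_card_function X z N g H1 HN Nz cg) as [f [cf [fz fg]]].
    { intros t ht Nt; apply gB; simpl; right; intro Mt; apply (disjMN t); auto. }
    exists f; split; [|split; [|split]]; auto.
    + intro t; destruct (classic (t = z)) as [-> | ht].
      * rewrite fz; lra.
      * rewrite (fg t ht); apply g01.
    + rewrite (fg x hx); exact gx.
    + intros a Ha; assert (ha : a <> z) by (intro; subst; auto).
      rewrite (fg a ha); apply gB; simpl; auto.
  - (* A = X \ {x}, so {x} is clopen *)
    destruct (clopen_indicator X (fun t => ~ A t) HA) as [f [cf [f0 f1]]].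
    { apply (open_ext _ _ (T1_open_point_compl x H1)); intro t; split.
      - intros Htx HnA; apply Hno; eauto.
      - intros HnnA ->; auto. }
    exists f; split; [|split; [|split]]; auto.
    intro t; destruct (classic (A t)).
    + rewrite f1; [lra | tauto].
    + rewrite f0; [lra | tauto].
Qed.

Lemma open_preimage_real (Y : TopSpace) (f : Y -> R) (P : R -> Prop) :
  continuous_real f ->
  (forall t, P (f t) -> exists eps, 0 < eps /\ forall r, Rabs (r - f t) < eps -> P r) ->
  is_open (fun t => P (f t)).
Proof.
  intros cf HP.
  apply (open_ext _ _ (open_union Y (fun W => is_open W /\ forall t, W t -> P (f t))
                         (fun W h => proj1 h))).
  intro t; split.
  - intros [W [[_ HW] Wt]]; auto.
  - intros Pt; destruct (HP t Pt) as [eps [Heps Hball]].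
    destruct (cf t eps Heps) as [U [HU [Ut Hclose]]].
    exists U; repeat split; auto.
Qed.

Lemma completely_regular_regular (Y : TopSpace) : completely_regular Y -> regular Y.
Proof.
  intros H A x HA Hx; destruct (H A x HA Hx) as [f [cf [f01 [fx fA]]]].
  exists (fun t => 1/2 < f t), (fun t => f t < 1/2); split; [|split; [|split; [|split]]].
  - apply (open_preimage_real Y f (fun r => 1/2 < r) cf); intros t Ht.
    exists (f t - 1/2); split; [lra|]; intros r Hr; apply Rabs_def2 in Hr; lra.
  - apply (open_preimage_real Y f (fun r => r < 1/2) cf); intros t Ht.
    exists (1/2 - f t); split; [lra|]; intros r Hr; apply Rabs_def2 in Hr; lra.
  - intros a Ha; rewrite fA; auto; lra.
  - simpl; rewrite fx; lra.
  - intros z [Hz1 Hz2]; lra.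
Qed.

(** * A T3 space with one normal card is normal *)

Section NormalCard.
Variables (X : TopSpace) (x : X).
Hypotheses (H1 : T1 X) (Hreg : regular X) (Hn : normal (remove_point X x)).

(* If x is not in B: regularity gives O' around B and O around x disjoint;
   separating A \/ ~ O' from B in X \ {x} and adding O to the side of A
   gives the separation. *)
Lemma separate_when_point_outside (A B : X -> Prop) :
  is_closed A -> is_closed B -> (forall t, ~ (A t /\ B t)) -> ~ B x ->
  exists U V, is_open U /\ is_open V /\ (forall a, A a -> U a) /\
    (forall b, B b -> V b) /\ (forall t, ~ (U t /\ V t)).
Proof.
  intros HA HB disjAB Bx.
  destruct (Hreg B x HB Bx) as [O' [O [HO' [HO [BO' [Ox disjO]]]]]].
  assert (HA' : is_closed (fun t => A t \/ ~ O' t))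
    by (apply closed_union, closed_compl; auto).
  destruct (Hn _ _ (closed_restrict X _ _ HA') (closed_restrict X _ B HB))
    as [U [V [HU [HV [AU [BV disj]]]]]].
  { intros s [[Ha | HnO'] Hb]; [apply (disjAB (proj1_sig s)) | apply HnO', BO']; auto. }
  destruct (open_subspace_lift_disjoint X _ U V (T1_open_point_compl x H1) HU HV disj)
    as [U' [V' [HU' [HV' [UU' [VV' disj']]]]]].
  exists (fun t => U' t \/ O t), (fun t => V' t /\ O' t).
  split; [|split; [|split; [|split]]].
  - apply open_union2; auto.
  - apply open_inter; auto.
  - intros a Ha; destruct (classic (a = x)) as [-> | ha]; [right; exact Ox | left].
    exact (UU' (exist _ a ha) (AU (exist _ a ha) (or_introl Ha))).
  - intros b Hb; assert (hb : b <> x) by (intro; subst; auto).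
    split; [exact (VV' (exist _ b hb) (BV (exist _ b hb) Hb)) | apply BO', Hb].
  - intros t [[U't | Ot] [V't O't]]; [apply (disj' t) | apply (disjO t)]; auto.
Qed.

Lemma normal_of_normal_card : normal X.
Proof.
  intros A B HA HB disjAB.
  destruct (classic (B x)) as [Bx | nBx].
  - assert (nAx : ~ A x) by (intro Ax; apply (disjAB x); auto).
    destruct (separate_when_point_outside B A HB HA
                (fun t H => disjAB t (conj (proj2 H) (proj1 H))) nAx)
      as [U [V [HU [HV [BU [AV disj]]]]]].
    exists V, U; repeat split; auto; intros t [Vt Ut]; apply (disj t); auto.
  - apply separate_when_point_outside; auto.
Qed.
End NormalCard.

Lemma T_T1 (i : sep_index) (Y : TopSpace) : i <> i0 -> T_ i Y -> T1 Y.
Proof.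
  intros Hi; destruct i; simpl.
  - congruence.
  - tauto.
  - intros H2 x y Hxy; destruct (H2 x y Hxy) as [U [V [HU [HV [Ux [Vy disj]]]]]].
    exists U; repeat split; auto; intro Uy; apply (disj y); auto.
  - intros [_ H1]; exact H1.
  - intros [_ H1]; exact H1.
  - intros H5; apply (T5_T4 Y H5).
  - intros [[_ H1] _]; exact H1.
Qed.

Lemma T_from_cards (i : sep_index) (X : TopSpace) : at_least_three X ->
  (forall z : X, T_ i (remove_point X z)) -> T_ i X.
Proof.
  intros H3 Hcards.
  destruct (classic (i = i0)) as [-> | Hi]; [apply T0_from_cards; auto|].
  assert (H1 : T1 X)
    by (apply T1_from_cards; auto; intro z; apply (T_T1 i); auto).
  destruct i; simpl in *.
  - congruence.
  - exact H1.
  - apply T2_from_cards; auto.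
  - split; auto; apply regular_from_cards; auto; intro z; apply Hcards.
  - split; auto; apply completely_regular_from_cards; auto.
    + apply regular_from_cards; auto; intro z; apply completely_regular_regular, Hcards.
    + intro z; apply Hcards.
  - apply T5_from_cards; auto.
  - split; [split; auto|].
    + apply normal_from_cards; auto; intro z; apply Hcards.
    + apply closed_G_delta_from_cards; auto; intro z; apply Hcards.
Qed.

Lemma T_iff_cards (i : sep_index) (X : TopSpace) : at_least_three X ->
  T_ i X <-> (forall Y : TopSpace, is_card Y X -> T_ i Y).
Proof.
  intros H3; split.
  - intros HX Y HY; exact (T_card i X Y HX HY).
  - intros Hcards; apply (T_from_cards i X H3); intro z; apply Hcards, remove_point_is_card.
Qed.

(* A reconstruction of a space with at least three points has at least
   three points: a card X \ {a} contains two points and is a card of Z. *)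
Lemma reconstruction_at_least_three (X Z : TopSpace) :
  at_least_three X -> reconstruction Z X -> at_least_three Z.
Proof.
  intros [a [b [c [hab [hac hbc]]]]] HR.
  destruct (proj2 (HR (remove_point X a)) (remove_point_is_card X a))
    as [z [f [g [gf _]]]].
  assert (hb : b <> a) by auto; assert (hc : c <> a) by auto.
  exists z, (proj1_sig (f (exist _ b hb))), (proj1_sig (f (exist _ c hc))).
  split; [|split].
  - intro E; apply (proj2_sig (f (exist _ b hb))); auto.
  - intro E; apply (proj2_sig (f (exist _ c hc))); auto.
  - intro E; apply hbc.
    destruct (subspace_embedding Z (fun y => y <> z)) as [inj _].
    pose proof (f_equal g (inj _ _ E)) as E'; rewrite !gf in E'.
    exact (f_equal (@proj1_sig _ _) E').
Qed.

Theorem theorem3p1 (X : TopSpace) (H3 : at_least_three X) :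
  (forall i : sep_index,
     (T_ i X <-> (forall Y : TopSpace, is_card Y X -> T_ i Y)) /\
     (forall Z : TopSpace, reconstruction Z X -> (T_ i X <-> T_ i Z))) /\
  ((forall Y : TopSpace, is_card Y X -> T3 Y) ->
   (exists Y : TopSpace, is_card Y X /\ T4 Y) -> T4 X).
Proof.
  split.
  - intro i; split; [apply T_iff_cards; auto|].
    (* X and Z have the same cards, and both have at least three points. *)
    intros Z HR.
    rewrite (T_iff_cards i X H3), (T_iff_cards i Z (reconstruction_at_least_three X Z H3 HR)).
    split; intros Hcards Y HY; apply Hcards, HR; auto.
  - intros HT3 [Y [[x Hhom] [HnY _]]].
    assert (HT3X : T3 X)
      by (apply (T_from_cards i3 X H3); intro z; apply HT3, remove_point_is_card).
    destruct HT3X as [Hreg H1]; split; auto.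
    apply (normal_of_normal_card X x H1 Hreg).
    destruct (homeomorphic_embedding _ _ (homeomorphic_sym _ _ Hhom)) as [g [Hg Hs]].
    exact (normal_surjective_embedding _ _ g Hg Hs HnY).
Qed.
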